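(* Let $A$ and $B$ be rings, $f: A\to B$ a ring homomorphism and $J$ a proper ideal of $B$ such that $J\subseteq \mathrm{nil}(B)$. Then $A\bowtie^{f}J$ is a nil-Armendariz ring if and only if $A$ is a nil-Armendariz ring.
   Context: All rings are associative with identity (not necessarily commutative), ring homomorphisms are unital, and ideals are two-sided. $\mathrm{nil}(R)$ denotes the set of nilpotent elements of a ring $R$, and $\mathrm{nil}(R)[x]$ the set of polynomials all of whose coefficients lie in $\mathrm{nil}(R)$. For a ring homomorphism $f:A\to B$ and an ideal $J$ of $B$, the amalgamation is the subring $A\bowtie^{f}J=\{(a,f(a)+j)\mid a\in A,\ j\in J\}$ of $A\times B$. A ring $R$ is nil-Armendariz if whenever $p(x)=\sum_{i=0}^n a_ix^i$ and $q(x)=\sum_{j=0}^m b_jx^j$ in $R[x]$ satisfy $p(x)q(x)\in\mathrm{nil}(R)[x]$, then $a_ib_j\in\mathrm{nil}(R)$ for all $i,j$. *)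

From HB Require Import structures.
From mathcomp Require Import all_boot all_algebra.
Set Implicit Arguments. Unset Strict Implicit. Unset Printing Implicit Defensive.
Import GRing.Theory.
Local Open Scope ring_scope.

Definition is_nil (R : nzRingType) (x : R) : Prop := exists n : nat, x ^+ n = 0.

Definition nil_Armendariz (R : nzRingType) : Prop :=
  forall p q : {poly R},
    (forall k : nat, is_nil (p * q)`_k) ->
    forall i j : nat, is_nil (p`_i * q`_j).

Record ideal2 (B : nzRingType) := Ideal2 {
  ideal2_pred :> {pred B};
  ideal2_0 : 0 \in ideal2_pred;
  ideal2_B : forall u v, u \in ideal2_pred -> v \in ideal2_pred -> u - v \in ideal2_pred;
  ideal2_Ml : forall a u, u \in ideal2_pred -> a * u \in ideal2_pred;
  ideal2_Mr : forall a u, u \in ideal2_pred -> u * a \in ideal2_pred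
}.

Section Amalgamation.
Variables (A B : nzRingType) (f : {rmorphism A -> B}) (J : ideal2 B).

(* (a, b) \in A ⋈^f J  iff  b = f a + j for some j \in J, i.e. b - f a \in J *)
Definition amalg_pred : {pred (A * B)%type} :=
  [pred x : (A * B)%type | x.2 - f x.1 \in J].

Lemma amalg_pred_subring : GRing.subring_closed amalg_pred.
Proof.
split.
- by rewrite inE /= rmorph1 subrr ideal2_0.
- move=> [a b] [c d]; rewrite !inE /= => H1 H2.
  rewrite rmorphB /=.
  have -> : b - d - (f a - f c) = (b - f a) - (d - f c).
    by rewrite !opprB !addrA [LHS]addrAC (addrAC b) [RHS]addrAC.
  exact: ideal2_B.
- move=> [a b] [c d]; rewrite !inE /= => H1 H2.
  rewrite rmorphM /=.
  have -> : b * d - f a * f c = (b - f a) * d - (- (f a * (d - f c))).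
    by rewrite opprK mulrBl mulrBr addrA subrK.
  apply: ideal2_B; first exact: ideal2_Mr.
  by have := ideal2_Ml (- f a) H2; rewrite mulNr.
Qed.

HB.instance Definition _ := GRing.isSubringClosed.Build (A * B)%type amalg_pred
  amalg_pred_subring.

Record amalgamation := Amalg { amalg_val :> (A * B)%type; _ : amalg_val \in amalg_pred }.
HB.instance Definition _ := [isSub for amalg_val].
HB.instance Definition _ := [Choice of amalgamation by <:].
HB.instance Definition _ := [SubChoice_isSubNzRing of amalgamation by <:].

End Amalgamation.

(** The projection [A ⋈^f J -> A, (a, b) |-> a] is a ring morphism with a
ring-morphism section [a |-> (a, f a)], and its kernel [0 × J] is nil since
[J ⊆ nil(B)].  Nil-Armendariz descends along any retraction of rings (map the
two polynomials through the section, then the coefficients back through the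
projection), and ascends along any ring morphism with nil kernel, because such
a morphism reflects nilpotence. *)

From HB Require Import structures.
From mathcomp Require Import all_boot all_algebra.

Set Implicit Arguments.
Unset Strict Implicit.
Unset Printing Implicit Defensive.

Local Open Scope ring_scope.
Import GRing.Theory.

Lemma is_nil_rmorph (R S : nzRingType) (g : {rmorphism R -> S}) (x : R) :
  is_nil x -> is_nil (g x).
Proof. by move=> [n xn0]; exists n; rewrite -rmorphXn xn0 rmorph0. Qed.

Lemma is_nil_rmorph_nil_kernel (R S : nzRingType) (g : {rmorphism R -> S}) :
    (forall x, g x = 0 -> is_nil x) ->
  forall x, is_nil (g x) -> is_nil x.
Proof.
move=> nil_ker x [n gxn0].
have [m xnm0] : is_nil (x ^+ n) by apply: nil_ker; rewrite rmorphXn.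
by exists (n * m)%N; rewrite exprM.
Qed.

Lemma nil_Armendariz_retract (R S : nzRingType)
    (g : {rmorphism R -> S}) (s : {rmorphism S -> R}) :
  cancel s g -> nil_Armendariz R -> nil_Armendariz S.
Proof.
move=> sK armR p q pq_nil i j.
rewrite -(sK p`_i) -(sK q`_j) -rmorphM; apply: is_nil_rmorph.
rewrite -!(coef_map s); apply: armR => k.
by rewrite -rmorphM coef_map; apply: is_nil_rmorph.
Qed.

Lemma nil_Armendariz_nil_kernel (R S : nzRingType) (g : {rmorphism R -> S}) :
    (forall x, g x = 0 -> is_nil x) ->
  nil_Armendariz S -> nil_Armendariz R.
Proof.
move=> nil_ker armS p q pq_nil i j.
apply: (is_nil_rmorph_nil_kernel nil_ker); rewrite rmorphM.
rewrite -!(coef_map g); apply: armS => k.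
by rewrite -rmorphM coef_map; apply: is_nil_rmorph.
Qed.

Section AmalgamationMorphisms.
Variables (A B : nzRingType) (f : {rmorphism A -> B}) (J : ideal2 B).

Local Notation R := (amalgamation f J).

Definition amalg_fst : {rmorphism R -> A} := fst \o val.

Lemma amalg_diag_subproof (a : A) : (a, f a) \in amalg_pred f J.
Proof. by rewrite inE /= subrr ideal2_0. Qed.

Definition amalg_diag (a : A) : R := Amalg (amalg_diag_subproof a).

Lemma amalg_diag_zmod_morphism : zmod_morphism amalg_diag.
Proof. by move=> a b; apply: val_inj; rewrite /= rmorphB. Qed.
HB.instance Definition _ :=
  GRing.isZmodMorphism.Build A R amalg_diag amalg_diag_zmod_morphism.

Lemma amalg_diag_monoid_morphism : monoid_morphism amalg_diag.
Proof.
by split=> [|a b]; apply: val_inj; rewrite /= ?rmorph1 ?rmorphM.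
Qed.
HB.instance Definition _ :=
  GRing.isMonoidMorphism.Build A R amalg_diag amalg_diag_monoid_morphism.

Lemma amalg_diagK : cancel amalg_diag amalg_fst.
Proof. by []. Qed.

Lemma amalg_fst_nil_kernel :
    (forall j, j \in J -> is_nil j) ->
  forall x : R, amalg_fst x = 0 -> is_nil x.
Proof.
move=> J_nil x; rewrite /amalg_fst /= => x1_0.
have /J_nil [n x2n0] : (val x).2 \in J.
  by have := valP x; rewrite inE x1_0 rmorph0 subr0.
exists n.+1; apply: val_inj; rewrite rmorphXn rmorph0.
apply: injective_projections; rewrite /= rmorphXn /=.
- by rewrite x1_0 expr0n.
- by rewrite exprSr x2n0 mul0r.
Qed.

End AmalgamationMorphisms.

Theorem theorem3p1 (A B : nzRingType) (f : {rmorphism A -> B}) (J : ideal2 B)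
    (J_proper : 1 \notin J)
    (J_nil : forall j : B, j \in J -> is_nil j) :
  nil_Armendariz (amalgamation f J) <-> nil_Armendariz A.
Proof.
split.
- exact: nil_Armendariz_retract (amalg_diagK f J).
- exact: nil_Armendariz_nil_kernel (amalg_fst_nil_kernel J_nil).
Qed.
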